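(* Let $\hat H(w)=e^{-w}$ and let $\alpha,\beta\in\mathbb{R}$ with $\alpha<2$, $\alpha-1<\beta<\alpha^2/4$, and $r_1:=\frac{\alpha-\sqrt{\alpha^2-4\beta}}{2}<-1$. Put $s=|\alpha-\sqrt{\alpha^2-4\beta}|=2|r_1|>2$. Then for $\tilde\tau>0$ and $\omega>0$, if $i\omega$ is a root of $\Phi$ then $\tan\omega>0$ and $\tilde\tau=\omega\tan\omega$; and the smallest $\tilde\tau>0$ for which $\Phi$ has a root on the imaginary axis is $$\tilde\tau_0=\omega_0\tan\omega_0=\arcsin\sqrt{\frac{2}{s}}\cdot\sqrt{\frac{2}{s-2}},\qquad \omega_0=\arcsin\sqrt{\frac{2}{s}},$$ at which $i\omega_0$ is a root.
   Context: For a delay-to-time-constant ratio $\tilde\tau>0$ and $\alpha,\beta\in\mathbb{R}$, the rescaled characteristic equation of the linearized coupled Wilson–Cowan system with kernel transform $\hat H$ is $$\Phi(w):=(w+\tilde\tau)^4-\alpha\,\tilde\tau^2(w+\tilde\tau)^2\hat H(w)^2+\beta\,\tilde\tau^4\hat H(w)^4=0,$$ equivalently $Q(w)^2-\alpha Q(w)+\beta=0$ with $Q(w)=\big(\frac{w+\tilde\tau}{\tilde\tau\hat H(w)}\big)^2$. For the Dirac (discrete) delay kernel, $\hat H(w)=e^{-w}$. *)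

From Stdlib Require Import Reals.
From Coquelicot Require Import Coquelicot.
Open Scope R_scope.

Definition Cexp (w : C) : C :=
  (exp (fst w) * cos (snd w), exp (fst w) * sin (snd w)).

Definition Hdirac (w : C) : C := Cexp (Copp w).

Definition Phi (H : C -> C) (alpha beta tau : R) (w : C) : C :=
  Cplus (Cminus (Cpow (Cplus w (RtoC tau)) 4)
                (Cmult (RtoC (alpha * tau ^ 2))
                       (Cmult (Cpow (Cplus w (RtoC tau)) 2) (Cpow (H w) 2))))
        (Cmult (RtoC (beta * tau ^ 4)) (Cpow (H w) 4)).

Definition imag (omega : R) : C := (0, omega).

From Stdlib Require Import Reals Lra.
From Coquelicot Require Import Coquelicot.
Open Scope R_scope.

(* Writing r1 <= r2 for the roots of Q^2 - alpha Q + beta, the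
   characteristic function factors for ANY kernel as
     Phi = [(w+tau)^2 - r1 tau^2 H^2] * [(w+tau)^2 - r2 tau^2 H^2].
   For the Dirac kernel at w = i omega, multiplying a factor by e^{2 i omega}
   turns it into z^2 - r tau^2 with z = (tau + i omega) e^{i omega} = p + i q,
   |z|^2 = tau^2 + omega^2.  Since r < 1 this vanishes exactly when p = 0 and
   tau^2 + omega^2 = -r tau^2; p = 0 means tau cos omega = omega sin omega, i.e.
   tau = omega tan omega.  Both roots satisfy r >= r1, so every imaginary root
   obeys omega^2 <= (s/2 - 1) tau^2, i.e. |omega| tan omega0 <= tau with
   sin omega0 = sqrt (2/s); as tan is increasing on (0, pi/2) the delay
   tau = |omega| tan |omega| is then at least omega0 tan omega0, a value that is
   attained through the factor of r1. *)

Definition delay_factor (H : C -> C) (r tau : R) (w : C) : C :=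
  Cminus (Cpow (Cplus w (RtoC tau)) 2) (Cmult (RtoC (r * tau ^ 2)) (Cpow (H w) 2)).

Lemma Phi_factor (H : C -> C) (r1 r2 tau : R) (w : C) :
  Phi H (r1 + r2) (r1 * r2) tau w
  = Cmult (delay_factor H r1 tau w) (delay_factor H r2 tau w).
Proof.
  unfold Phi, delay_factor.
  rewrite !RtoC_mult, RtoC_plus, !RtoC_pow. simpl. ring.
Qed.

Lemma Cmult_eq_0 (a b : C) : Cmult a b = 0%C -> a = 0%C \/ b = 0%C.
Proof.
  intro Hab.
  assert (Hmod : Cmod a * Cmod b = 0).
  { rewrite <- Cmod_mult, Hab. apply Cmod_0. }
  apply Rmult_integral in Hmod as [Ha | Hb]; [left | right]; now apply Cmod_eq_0.
Qed.

Definition rotated (tau omega : R) : C :=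
  Cmult (Cplus (imag omega) (RtoC tau)) (Cexp (imag omega)).

Lemma rotated_components (tau omega : R) :
  rotated tau omega
  = (tau * cos omega - omega * sin omega, tau * sin omega + omega * cos omega).
Proof.
  unfold rotated, Cexp, imag, Cplus, Cmult, RtoC; simpl.
  rewrite exp_0. f_equal; ring.
Qed.

(* Rotation preserves the modulus: |z|^2 = tau^2 + omega^2. *)
Lemma rotated_norm2 (tau omega : R) :
  (tau * cos omega - omega * sin omega) ^ 2 + (tau * sin omega + omega * cos omega) ^ 2
  = tau ^ 2 + omega ^ 2.
Proof.
  pose proof (sin2_cos2 omega) as Hpyth. unfold Rsqr in Hpyth.
  replace (tau ^ 2 + omega ^ 2)
    with ((tau ^ 2 + omega ^ 2) * (sin omega * sin omega + cos omega * cos omega))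
    by (rewrite Hpyth; ring).
  ring.
Qed.

Lemma Hdirac_imag_inverse (omega : R) :
  Cmult (Hdirac (imag omega)) (Cexp (imag omega)) = 1%C.
Proof.
  pose proof (sin2_cos2 omega) as Hpyth. unfold Rsqr in Hpyth.
  unfold Hdirac, Cexp, imag, Copp, Cmult; simpl.
  rewrite Ropp_0, exp_0, cos_neg, sin_neg.
  unfold RtoC. f_equal; lra.
Qed.

Lemma delay_factor_dirac (r tau omega : R) :
  delay_factor Hdirac r tau (imag omega)
  = Cmult (Cpow (Hdirac (imag omega)) 2)
          (Cminus (Cpow (rotated tau omega) 2) (RtoC (r * tau ^ 2))).
Proof.
  unfold delay_factor, rotated.
  set (h := Hdirac (imag omega)). set (e := Cexp (imag omega)).
  set (z := Cplus (imag omega) (RtoC tau)).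
  assert (Hhe : Cmult h e = 1%C) by apply Hdirac_imag_inverse.
  transitivity (Cminus (Cmult (Cpow z 2) (Cpow (Cmult h e) 2))
                       (Cmult (RtoC (r * tau ^ 2)) (Cpow h 2))).
  - rewrite Hhe. unfold z. simpl. ring.
  - simpl. ring.
Qed.

(* For r < 1 a Dirac factor vanishes at i omega iff  z^2 = r tau^2  with z
   purely imaginary: the real part of z vanishes and |z|^2 = -r tau^2. *)
Lemma delay_factor_dirac_root (r tau omega : R) :
  r < 1 -> 0 < tau ->
  delay_factor Hdirac r tau (imag omega) = 0%C
  <-> tau * cos omega - omega * sin omega = 0 /\ tau ^ 2 + omega ^ 2 = - r * tau ^ 2.
Proof.
  intros Hr Htau.
  pose proof (rotated_norm2 tau omega) as Hnorm.
  pose proof (Hdirac_imag_inverse omega) as Hinv.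
  rewrite delay_factor_dirac, rotated_components.
  set (p := tau * cos omega - omega * sin omega) in *.
  set (q := tau * sin omega + omega * cos omega) in *.
  set (h := Hdirac (imag omega)) in *. set (e := Cexp (imag omega)) in *.
  assert (Hsq : Cminus (Cpow (p, q) 2) (RtoC (r * tau ^ 2))
                = (p ^ 2 - q ^ 2 - r * tau ^ 2, 2 * p * q)).
  { unfold Cminus, Cplus, Copp, Cmult, RtoC; simpl. f_equal; ring. }
  set (X := Cminus (Cpow (p, q) 2) (RtoC (r * tau ^ 2))) in *.
  split.
  - intro Hroot.
    (* h is invertible (h e = 1), so z^2 - r tau^2 itself vanishes. *)
    assert (HX : X = RtoC 0).
    { transitivity (Cmult (Cpow e 2) (Cmult (Cpow h 2) X)).
      - transitivity (Cmult (Cpow (Cmult h e) 2) X); [rewrite Hinv | ]; simpl; ring.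
      - rewrite Hroot. ring. }
    rewrite Hsq in HX. injection HX as Hre Him.
    assert (Hpq : p * q = 0) by lra.
    apply Rmult_integral in Hpq as [Hp | Hq].
    + split; [exact Hp | rewrite Hp in Hre, Hnorm; lra].
    + (* z real would give tau^2 <= |z|^2 = r tau^2 < tau^2. *)
      exfalso. rewrite Hq in Hre, Hnorm.
      assert (0 < (1 - r) * tau ^ 2) by (apply Rmult_lt_0_compat; [lra | apply pow_lt; lra]).
      nra.
  - intros [Hp Hmod].
    assert (HX : X = RtoC 0).
    { rewrite Hsq, Hp in *. unfold RtoC. f_equal; lra. }
    rewrite HX. ring.
Qed.

(* For positive delay and frequency, tau cos omega = omega sin omega means
   tau = omega tan omega with tan omega > 0 (cos omega = 0 would force sin omega = 0). *)
Lemma tan_at_imag_root (tau omega : R) :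
  0 < tau -> 0 < omega -> tau * cos omega - omega * sin omega = 0 ->
  0 < tan omega /\ tau = omega * tan omega.
Proof.
  intros Htau Homega Hp.
  pose proof (sin2_cos2 omega) as Hpyth. unfold Rsqr in Hpyth.
  assert (Hcos : cos omega <> 0).
  { intro Hc. rewrite Hc in Hp, Hpyth.
    assert (sin omega = 0) by nra. nra. }
  assert (Htan : tan omega = tau / omega).
  { unfold tan. field_simplify_eq; [lra | split; [lra | exact Hcos]]. }
  rewrite Htan. split; [apply Rdiv_lt_0_compat; lra | field; lra].
Qed.

(* Minimality: if tau = a tan a and a tan omega0 <= tau with omega0 in (0, pi/2),
   then omega0 tan omega0 <= tau; below omega0, tan a < tan omega0 would give
   tau < a tan omega0. *)
Lemma delay_lower_bound (omega0 t0 tau a : R) :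
  0 < omega0 < PI / 2 -> tan omega0 = t0 -> 0 < a ->
  tau * cos a - a * sin a = 0 -> a * t0 <= tau -> omega0 * t0 <= tau.
Proof.
  intros Homega0 Ht0 Ha Hp Hbound.
  assert (Ht0pos : 0 < t0) by (rewrite <- Ht0; apply tan_gt_0; lra).
  destruct (Rlt_or_le a omega0) as [Hlt | Hle].
  - exfalso.
    assert (Hcos : 0 < cos a) by (apply cos_gt_0; lra).
    assert (Htan_lt : tan a < t0) by (rewrite <- Ht0; apply tan_increasing; lra).
    assert (Htau : tau = a * tan a) by (unfold tan; field_simplify_eq; lra).
    nra.
  - nra.
Qed.

Lemma asin_sqrt_constants (s : R) :
  2 < s ->
  0 < asin (sqrt (2 / s)) < PI / 2 /\ tan (asin (sqrt (2 / s))) = sqrt (2 / (s - 2)).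
Proof.
  intro Hs.
  assert (Hx0 : 0 < sqrt (2 / s)) by (apply sqrt_lt_R0, Rdiv_lt_0_compat; lra).
  assert (Hx2 : sqrt (2 / s) ^ 2 = 2 / s) by (apply pow2_sqrt, Rlt_le, Rdiv_lt_0_compat; lra).
  assert (Hfrac : 2 / s < 1) by (apply Rmult_lt_reg_r with s; [lra | field_simplify; lra]).
  assert (Hx1 : sqrt (2 / s) < 1) by nra.
  split; [split |].
  - destruct (Rlt_or_le 0 (asin (sqrt (2 / s)))) as [Hpos | Hnonpos]; [exact Hpos | exfalso].
    pose proof (asin_bound (sqrt (2 / s))).
    assert (0 <= sin (- asin (sqrt (2 / s)))) by (apply sin_ge_0; pose proof PI_RGT_0; lra).
    rewrite sin_neg, sin_asin in *; lra.
  - apply asin_bound_lt. lra.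
  - rewrite tan_asin by lra. rewrite Rsqr_pow2, Hx2.
    replace (2 / (s - 2)) with ((2 / s) / (1 - 2 / s)) by (field; lra).
    rewrite (sqrt_div_alt (2 / s) (1 - 2 / s)) by lra. reflexivity.
Qed.

Lemma root_condition_abs (tau omega : R) :
  tau * cos omega - omega * sin omega = 0 ->
  tau * cos (Rabs omega) - Rabs omega * sin (Rabs omega) = 0.
Proof.
  intro Hp. destruct (Rle_or_lt 0 omega).
  - rewrite Rabs_right by lra. exact Hp.
  - rewrite Rabs_left, cos_neg, sin_neg by lra. lra.
Qed.

Lemma frequency_bound (r1 t0 tau omega : R) :
  0 < tau -> 0 < t0 -> t0 ^ 2 * (- r1 - 1) = 1 ->
  tau ^ 2 + omega ^ 2 <= - r1 * tau ^ 2 -> Rabs omega * t0 <= tau.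
Proof.
  intros Htau Ht0 Hcrit Hmod.
  assert (Habs2 : Rabs omega ^ 2 = omega ^ 2)
    by (rewrite <- !Rsqr_pow2; symmetry; apply Rsqr_abs).
  assert (Hsq : (Rabs omega * t0) ^ 2 <= tau ^ 2).
  { replace ((Rabs omega * t0) ^ 2) with (omega ^ 2 * t0 ^ 2) by (rewrite <- Habs2; ring).
    replace (tau ^ 2) with (tau ^ 2 * (t0 ^ 2 * (- r1 - 1))) at 2 by (rewrite Hcrit; ring).
    assert (0 < t0 ^ 2) by (apply pow_lt; lra).
    nra. }
  pose proof (Rabs_pos omega). nra.
Qed.

Section ImaginaryRoots.

Variables r1 r2 : R.
Hypothesis r1_le_r2 : r1 <= r2.
Hypothesis r2_lt_1 : r2 < 1.

(* An imaginary root forces tau cos omega = omega sin omega, and the modulus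
   condition of whichever factor vanishes gives tau^2 + omega^2 <= -r1 tau^2. *)
Lemma Phi_imag_root_necessary (tau omega : R) :
  0 < tau -> Phi Hdirac (r1 + r2) (r1 * r2) tau (imag omega) = 0%C ->
  tau * cos omega - omega * sin omega = 0 /\ tau ^ 2 + omega ^ 2 <= - r1 * tau ^ 2.
Proof.
  intros Htau Hroot.
  rewrite Phi_factor in Hroot.
  assert (Htau2 : 0 < tau ^ 2) by (apply pow_lt; lra).
  apply Cmult_eq_0 in Hroot as [Hroot | Hroot];
    apply delay_factor_dirac_root in Hroot as [Hp Hmod]; try lra; split; nra.
Qed.

Lemma Phi_imag_root_sufficient (tau omega : R) :
  0 < tau -> tau * cos omega - omega * sin omega = 0 -> tau ^ 2 + omega ^ 2 = - r1 * tau ^ 2 ->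
  Phi Hdirac (r1 + r2) (r1 * r2) tau (imag omega) = 0%C.
Proof.
  intros Htau Hp Hmod.
  rewrite Phi_factor, (proj2 (delay_factor_dirac_root r1 tau omega ltac:(lra) Htau)) by auto.
  ring.
Qed.

Lemma Phi_imag_root_delay_bound (omega0 t0 tau omega : R) :
  0 < omega0 < PI / 2 -> tan omega0 = t0 -> t0 ^ 2 * (- r1 - 1) = 1 -> 0 < tau ->
  Phi Hdirac (r1 + r2) (r1 * r2) tau (imag omega) = 0%C -> omega0 * t0 <= tau.
Proof.
  intros Homega0 Htan0 Hcrit Htau Hroot.
  destruct (Phi_imag_root_necessary tau omega Htau Hroot) as [Hp Hmod].
  assert (Ht0 : 0 < t0) by (rewrite <- Htan0; apply tan_gt_0; lra).
  apply (delay_lower_bound omega0 t0 tau (Rabs omega)); auto using root_condition_abs.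
  - apply Rabs_pos_lt. intro Hzero. rewrite Hzero, cos_0 in Hp. lra.
  - exact (frequency_bound r1 t0 tau omega Htau Ht0 Hcrit Hmod).
Qed.

Lemma Phi_imag_root_critical (omega0 t0 : R) :
  0 < omega0 < PI / 2 -> tan omega0 = t0 -> t0 ^ 2 * (- r1 - 1) = 1 ->
  Phi Hdirac (r1 + r2) (r1 * r2) (omega0 * t0) (imag omega0) = 0%C.
Proof.
  intros Homega0 Htan0 Hcrit.
  assert (Hcos : 0 < cos omega0) by (apply cos_gt_0; lra).
  assert (Ht0 : 0 < t0) by (rewrite <- Htan0; apply tan_gt_0; lra).
  apply Phi_imag_root_sufficient.
  - apply Rmult_lt_0_compat; lra.
  - rewrite <- Htan0. unfold tan. field. lra.
  - replace (- r1 * (omega0 * t0) ^ 2)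
      with ((omega0 * t0) ^ 2 + omega0 ^ 2 * (t0 ^ 2 * (- r1 - 1))) by ring.
    rewrite Hcrit. ring.
Qed.

End ImaginaryRoots.

Lemma characteristic_roots_product (alpha beta : R) :
  beta < alpha ^ 2 / 4 ->
  beta = (alpha - sqrt (alpha ^ 2 - 4 * beta)) / 2 * ((alpha + sqrt (alpha ^ 2 - 4 * beta)) / 2).
Proof.
  intro Hdisc.
  assert (Hsq : sqrt (alpha ^ 2 - 4 * beta) ^ 2 = alpha ^ 2 - 4 * beta) by (apply pow2_sqrt; lra).
  replace ((alpha - sqrt (alpha ^ 2 - 4 * beta)) / 2 * ((alpha + sqrt (alpha ^ 2 - 4 * beta)) / 2))
    with ((alpha ^ 2 - sqrt (alpha ^ 2 - 4 * beta) ^ 2) / 4) by field.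
  rewrite Hsq. field.
Qed.

(* (1 - r1)(1 - r2) = 1 - alpha + beta > 0 keeps the larger root below 1. *)
Lemma larger_root_lt_1 (r1 r2 : R) : r1 < 1 -> r1 + r2 - 1 < r1 * r2 -> r2 < 1.
Proof. intros Hr1 Hsum. assert (0 < (1 - r1) * (1 - r2)) by nra. nra. Qed.

Theorem mainTheorem8 (alpha beta : R)
  (halpha : alpha < 2)
  (hbeta1 : alpha - 1 < beta) (hbeta2 : beta < alpha ^ 2 / 4)
  (hr1 : (alpha - sqrt (alpha ^ 2 - 4 * beta)) / 2 < -1) :
  let s := Rabs (alpha - sqrt (alpha ^ 2 - 4 * beta)) in
  let omega0 := asin (sqrt (2 / s)) in
  let tau0 := asin (sqrt (2 / s)) * sqrt (2 / (s - 2)) in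
  (forall tau omega : R, 0 < tau -> 0 < omega ->
     Phi Hdirac alpha beta tau (imag omega) = 0 ->
     0 < tan omega /\ tau = omega * tan omega)
  /\ tau0 = omega0 * tan omega0
  /\ 0 < tau0
  /\ Phi Hdirac alpha beta tau0 (imag omega0) = 0
  /\ (forall tau : R, 0 < tau ->
        (exists omega : R, Phi Hdirac alpha beta tau (imag omega) = 0) ->
        tau0 <= tau).
Proof.
  intros s omega0 tau0.
  pose proof (characteristic_roots_product alpha beta hbeta2) as Hbeta.
  set (d := sqrt (alpha ^ 2 - 4 * beta)) in *.
  set (r1 := (alpha - d) / 2) in *. set (r2 := (alpha + d) / 2) in *.
  assert (Hd : 0 <= d) by apply sqrt_pos.
  assert (Hr12 : r1 <= r2) by (unfold r1, r2; lra).
  assert (Hr2 : r2 < 1) by (apply (larger_root_lt_1 r1); unfold r1, r2 in *; lra).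
  assert (HPhi : forall tau w, Phi Hdirac alpha beta tau w = Phi Hdirac (r1 + r2) (r1 * r2) tau w)
    by (intros; rewrite <- Hbeta; f_equal; unfold r1, r2; lra).
  assert (Hs : s = - 2 * r1) by (unfold s, r1 in *; rewrite Rabs_left; lra).
  destruct (asin_sqrt_constants s) as [Homega0 Htan0]; [lra |]. fold omega0 in Homega0, Htan0.
  set (t0 := sqrt (2 / (s - 2))) in *.
  assert (Hcrit : t0 ^ 2 * (- r1 - 1) = 1).
  { unfold t0. rewrite pow2_sqrt by (apply Rlt_le, Rdiv_lt_0_compat; lra). rewrite Hs. field. lra. }
  assert (Htau0 : tau0 = omega0 * t0) by reflexivity.
  split; [| split; [| split; [| split]]].
  - intros tau omega Htau Homega Hroot. rewrite HPhi in Hroot.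
    apply tan_at_imag_root; [exact Htau | exact Homega |].
    exact (proj1 (Phi_imag_root_necessary r1 r2 Hr12 Hr2 tau omega Htau Hroot)).
  - rewrite Htan0. exact Htau0.
  - rewrite Htau0, <- Htan0. apply Rmult_lt_0_compat; [lra | apply tan_gt_0; lra].
  - rewrite HPhi, Htau0. exact (Phi_imag_root_critical r1 r2 Hr12 Hr2 omega0 t0 Homega0 Htan0 Hcrit).
  - intros tau Htau [omega Hroot]. rewrite HPhi in Hroot. rewrite Htau0.
    exact (Phi_imag_root_delay_bound r1 r2 Hr12 Hr2 omega0 t0 tau omega Homega0 Htan0 Hcrit Htau Hroot).
Qed.
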